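(* Let $\mathfrak{n}$ be a complex semisimple Lie algebra and $z\in\mathfrak{n}$ an element such that the adjoint operator $\operatorname{ad}(z)$ on $\mathfrak{n}$ has exactly three distinct eigenvalues $0,\alpha,\beta$. Then $\alpha+\beta=0$. *)

From HB Require Import structures.
From mathcomp Require Import all_boot all_order all_algebra.
From mathcomp Require Import complex.
From mathcomp Require Import Rstruct.
Set Implicit Arguments. Unset Strict Implicit. Unset Printing Implicit Defensive.
Import Order.TTheory GRing.Theory Num.Theory.
Local Open Scope ring_scope.

Definition C : fieldType := (Rdefinitions.R)[i].

Record lie_bracket (V : vectType C) := LieBracket {
  lb : V -> V -> V;
  lb_linl : forall (a : C) (x y w : V), lb (a *: x + y) w = a *: lb x w + lb y w;
  lb_linr : forall (a : C) (x y w : V), lb w (a *: x + y) = a *: lb w x + lb w y;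
  lb_alt : forall x : V, lb x x = 0;
  lb_jacobi : forall x y w : V,
      lb x (lb y w) + lb y (lb w x) + lb w (lb x y) = 0
}.

Section LieDefs.
Variables (V : vectType C) (L : lie_bracket V).
Local Notation "[[ x , y ]]" := (lb L x y).

Definition is_ideal (I : {vspace V}) : Prop :=
  forall x y : V, x \in I -> [[x, y]] \in I.

(* Derived algebra [I, I]: the span of all brackets of elements of I
   (by bilinearity it is spanned by brackets of basis vectors). *)
Definition derived (I : {vspace V}) : {vspace V} :=
  (<< [seq [[u, v]] | u <- vbasis I, v <- vbasis I] >>)%VS.

Definition solvable_subspace (I : {vspace V}) : Prop :=
  exists k : nat, iter k derived I = 0%VS.

Definition semisimple : Prop :=
  forall I : {vspace V}, is_ideal I -> solvable_subspace I -> I = 0%VS.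

Definition ad_eigenvalue (z : V) (a : C) : Prop :=
  exists2 v : V, v != 0 & [[z, v]] = a *: v.
End LieDefs.

From HB Require Import structures.
From mathcomp Require Import all_boot all_order all_algebra.
From mathcomp Require Import complex Rstruct.
Set Implicit Arguments. Unset Strict Implicit. Unset Printing Implicit Defensive.
Import GRing.Theory Num.Theory.
Local Open Scope ring_scope.

(* If alpha + beta were nonzero, the sum N of the generalized eigenspaces
   V_alpha and V_beta of ad(z) would be a nonzero solvable ideal. Since ad(z)
   is a derivation, [V_c, V_d] lies in V_(c+d), and V_c = 0 unless c is an
   eigenvalue. As alpha + beta is not an eigenvalue and 2 alpha, 2 beta are
   nonzero, N is an ideal, and [N, N] lies in V_(2 alpha) + V_(2 beta), of
   which at most one summand is nonzero. Finally V_c is solvable for c <> 0: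
   its k-th derived algebra lies in V_(2^k c), and c, 2c, 4c cannot all be
   eigenvalues. *)

Section IterLinear.
Variables (R : pzRingType) (U : lmodType R) (f : {linear U -> U}).

Fact iter_is_linear k : linear (iter k f).
Proof. by elim: k => [|k IHk] a u v //=; rewrite IHk linearP. Qed.
HB.instance Definition _ k :=
  GRing.isLinear.Build R U U *:%R (iter k f) (iter_is_linear k).

End IterLinear.

Lemma iter_commute (T : Type) (f g : T -> T) k m x :
  (forall y, f (g y) = g (f y)) -> iter k f (iter m g x) = iter m g (iter k f x).
Proof.
move=> fg; elim: m => //= m <-.
by elim: k (iter m g x) => //= k IHk y; rewrite IHk fg.
Qed.

Lemma prod_XsubC_dvdp_exp (F : fieldType) (f : {poly F}) (rs : seq F) :
  all (root f) rs -> \prod_(r <- rs) ('X - r%:P) %| f ^+ size rs.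
Proof.
elim: rs => [|r rs IHrs] /=; first by rewrite big_nil dvd1p.
case/andP=> fr /IHrs; rewrite big_cons exprS; apply: dvdp_mul.
by rewrite dvdp_XsubCl.
Qed.

Section MatrixGeneralizedEigenspaces.
Variables (F : closedFieldType) (n : nat) (A : 'M[F]_n.+1) (c1 c2 c3 : F).
Hypotheses (n12 : c1 != c2) (n13 : c1 != c3) (n23 : c2 != c3).
Hypothesis spectrum : forall c, eigenvalue A c -> [\/ c = c1, c = c2 | c = c3].

Lemma char_poly_dvdp_spectrum :
  char_poly A %| (('X - c1%:P) * ('X - c2%:P) * ('X - c3%:P)) ^+ n.+1.
Proof.
have [rs def_p] := closed_field_poly_normal (char_poly A).
rewrite (monicP (char_poly_monic A)) scale1r in def_p.
have size_rs : size rs = n.+1.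
  by have := size_char_poly A; rewrite def_p size_prod_XsubC => -[].
rewrite def_p -size_rs; apply: prod_XsubC_dvdp_exp; apply/allP => r r_rs.
have : eigenvalue A r by rewrite eigenvalue_root_char def_p root_prod_XsubC.
by case/spectrum => ->; rewrite !rootM !root_XsubC eqxx ?orbT.
Qed.

Lemma geigenspace_sum3 :
  (1%:M <= geigenspace A c1 + geigenspace A c2 + geigenspace A c3)%MS.
Proof.
have coprime (c d : F) : c != d ->
    coprimep (('X - c%:P) ^+ n.+1) (('X - d%:P) ^+ n.+1).
  move=> ncd; rewrite coprimep_expl // coprimep_expr //.
  by rewrite coprimep_XsubC root_XsubC eq_sym.
rewrite -(kermxpoly_min (dvdp_trans (mxminpoly_dvd_char A) char_poly_dvdp_spectrum)).
rewrite !exprMn kermxpolyM ?coprimepMl ?coprime //.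
apply: addsmxS; last exact: submx_refl.
by rewrite kermxpolyM ?coprime.
Qed.

End MatrixGeneralizedEigenspaces.

Lemma row_geneigen_split3 (F : closedFieldType) n (A : 'M[F]_n) (c1 c2 c3 : F) :
    c1 != c2 -> c1 != c3 -> c2 != c3 ->
    (forall c, eigenvalue A c -> [\/ c = c1, c = c2 | c = c3]) ->
  forall u : 'rV_n, exists u1 u2 u3, [/\ u = u1 + u2 + u3,
    u1 *m (A - c1%:M) ^+ n = 0, u2 *m (A - c2%:M) ^+ n = 0
  & u3 *m (A - c3%:M) ^+ n = 0].
Proof.
case: n A => [|n] A n12 n13 n23 spectrum u.
  by exists u, 0, 0; split; rewrite ?addr0 // thinmx0.
have := submx_trans (submx1 u) (geigenspace_sum3 n12 n13 n23 spectrum).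
case/sub_addsmxP=> [[u12 u3] /= ->].
have /sub_addsmxP[[u1 u2] /= ->] := submxMl u12 (geigenspace A c1 + geigenspace A c2)%MS.
exists (u1 *m geigenspace A c1), (u2 *m geigenspace A c2), (u3 *m geigenspace A c3).
by split; rewrite // -mulmxA geigenspaceE mulmx_ker mulmx0.
Qed.

Lemma exists_natmul_exp2_notin (R : numDomainType) (x a b : R) :
  x != 0 -> exists k, x *+ 2 ^ k \notin [:: 0; a; b].
Proof.
(* [x], [2x] and [4x] are distinct, so not all of them lie in {a, b}. *)
move=> x_neq0; pose s := [seq x *+ 2 ^ k | k <- iota 0 3].
have s_uniq : uniq s.
  by rewrite map_inj_uniq ?iota_uniq // => i j /(mulrIn x_neq0) /expnI; apply.
have [/allP s_ab|/allPn[_ /mapP[k _ ->] k_ab]] := boolP (all (mem [:: a; b]) s).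
  by have := uniq_leq_size s_uniq s_ab.
by exists k; rewrite in_cons negb_or k_ab mulrn_eq0 expn_eq0 (negbTE x_neq0).
Qed.

Lemma double_neq0 (R : numDomainType) (x : R) : x != 0 -> x + x != 0.
Proof. by rewrite -mulr2n mulrn_eq0. Qed.

Lemma quadruple_neq (R : numDomainType) (x : R) : x != 0 -> x + x + (x + x) != x.
Proof.
move=> x_neq0; rewrite -!mulr2n -mulrnA -[X in _ != X]mulr1n.
by rewrite (inj_eq (mulrIn x_neq0)).
Qed.

Section LieBracket.
Variables (V : vectType C) (L : lie_bracket V).
Local Notation "[[ x , y ]]" := (lb L x y).

Fact lb_is_linear x : linear (lb L x).
Proof. by move=> a u v; rewrite lb_linr. Qed.
HB.instance Definition _ x :=
  GRing.isLinear.Build C V V *:%R (lb L x) (lb_is_linear x).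

Lemma lb0r w : [[w, 0]] = 0.
Proof. exact: linear0. Qed.

Lemma lbZr a x w : [[w, a *: x]] = a *: [[w, x]].
Proof. exact: linearZ. Qed.

Lemma lbDl x y w : [[x + y, w]] = [[x, w]] + [[y, w]].
Proof. by have := lb_linl L 1 x y w; rewrite !scale1r. Qed.

Lemma lb0l w : [[0, w]] = 0.
Proof. by apply: (@addrI _ [[0, w]]); rewrite -lbDl !addr0. Qed.

Lemma lbZl a x w : [[a *: x, w]] = a *: [[x, w]].
Proof. by have := lb_linl L a x 0 w; rewrite !addr0 lb0l addr0. Qed.

Lemma lbBl x y w : [[x - y, w]] = [[x, w]] - [[y, w]].
Proof. by rewrite lbDl -scaleN1r lbZl scaleN1r. Qed.

Lemma lb_anticomm x y : [[x, y]] = - [[y, x]].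
Proof.
have := lb_alt L (x + y); rewrite lbDl !linearD /= !lb_alt add0r addr0.
by move/eqP; rewrite addr_eq0 => /eqP.
Qed.

Lemma lb_leibniz x y w : [[x, [[y, w]]]] = [[ [[x, y]], w]] + [[y, [[x, w]]]].
Proof.
have := lb_jacobi L x y w.
rewrite (lb_anticomm w x) linearN /= (lb_anticomm w [[x, y]]) => J.
by apply/eqP; rewrite -subr_eq0 -J opprD addrA addrAC.
Qed.

Lemma derived_sub (I S : {vspace V}) :
  {in I &, forall x y, [[x, y]] \in S} -> (derived L I <= S)%VS.
Proof.
move=> IS; apply/span_subvP => _ /allpairsP[ [x y] /= [x_I y_I ->] ].
by apply: IS; apply: vbasis_mem.
Qed.

End LieBracket.

Section GeneralizedEigenvectors.
Variables (V : vectType C) (L : lie_bracket V) (z : V).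
Local Notation "[[ x , y ]]" := (lb L x y).

Definition ad_shift (c : C) (v : V) := [[z, v]] - c *: v.

Fact ad_shift_is_linear c : linear (ad_shift c).
Proof.
move=> s u v; rewrite /ad_shift linearP /= scalerBr scalerDr !scalerA mulrC.
by rewrite opprD addrACA.
Qed.
HB.instance Definition _ c :=
  GRing.isLinear.Build C V V *:%R (ad_shift c) (ad_shift_is_linear c).

Lemma ad_shift_commute c d v : ad_shift c (ad_shift d v) = ad_shift d (ad_shift c v).
Proof.
rewrite /ad_shift !linearB !linearZ /= !scalerA mulrC.
by rewrite -!addrA (addrCA (d *: _)).
Qed.

Lemma iter_ad_shift_commute c d k m v :
  iter k (ad_shift c) (iter m (ad_shift d) v) =
  iter m (ad_shift d) (iter k (ad_shift c) v).
Proof. by apply: iter_commute => w; rewrite ad_shift_commute. Qed.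

Lemma ad_shift_bracket c d x y :
  ad_shift (c + d) [[x, y]] = [[ad_shift c x, y]] + [[x, ad_shift d y]].
Proof.
rewrite /ad_shift lb_leibniz lbBl [lb L x (_ - _)]linearB /=.
by rewrite lbZl lbZr scalerDl opprD addrACA.
Qed.

Definition gen_eigen c k v := iter k (ad_shift c) v = 0.

Lemma gen_eigenB c k u v : gen_eigen c k u -> gen_eigen c k v -> gen_eigen c k (u - v).
Proof. by rewrite /gen_eigen linearB /= => -> ->; rewrite subr0. Qed.

Lemma gen_eigen_le c k m v : (k <= m)%N -> gen_eigen c k v -> gen_eigen c m v.
Proof. by move=> /subnK <- Gv; rewrite /gen_eigen iterD Gv linear0. Qed.

Lemma gen_eigen_bracket c d i j x y :
  gen_eigen c i x -> gen_eigen d j y -> gen_eigen (c + d) (i + j) [[x, y]].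
Proof.
rewrite /gen_eigen; elim: i j x y => [|i IHi] j x y Gx Gy.
  by rewrite (Gx : x = 0) lb0l linear0.
elim: j y Gy => [|j IHj] y Gy; first by rewrite (Gy : y = 0) lb0r linear0.
rewrite addSn iterSr ad_shift_bracket linearD /=.
rewrite IHi -?iterSr // add0r addnS -addSn.
by apply: IHj; rewrite -iterSr.
Qed.

Lemma iter_ad_shift_eigen c d k u :
  ad_shift d u = 0 -> iter k (ad_shift c) u = (d - c) ^+ k *: u.
Proof.
move=> /eqP; rewrite subr_eq0 => /eqP zu.
elim: k => [|k IHk] /=; first by rewrite scale1r.
by rewrite IHk linearZ /= /ad_shift zu -scalerBl exprSr scalerA.
Qed.

Lemma gen_eigen_eq0 c d k m u : c != d ->
  gen_eigen c k u -> gen_eigen d m u -> u = 0.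
Proof.
rewrite /gen_eigen => ncd; elim: m u => [|m IHm] u //= Gc Gd.
have Du : ad_shift d u = 0.
  apply: IHm; last by rewrite -iterSr.
  by rewrite (iter_ad_shift_commute _ _ _ 1) /= Gc linear0.
move: Gc; rewrite (iter_ad_shift_eigen _ _ Du) => /eqP.
by rewrite scaler_eq0 expf_eq0 subr_eq0 eq_sym (negbTE ncd) andbF => /eqP.
Qed.

Lemma gen_eigen_eigenvalue c k u :
  gen_eigen c k u -> u != 0 -> ad_eigenvalue L z c.
Proof.
rewrite /gen_eigen; elim: k u => [|k IHk] u Gu nz0.
  by rewrite (Gu : u = 0) eqxx in nz0.
have [Du|nzDu] := eqVneq (ad_shift c u) 0.
  by exists u => //; apply/eqP; rewrite -subr_eq0 -/(ad_shift c u) Du.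
by apply: IHk nzDu; rewrite -iterSr.
Qed.

Lemma gen_eigen_addr_eq0 c1 c2 c3 k m u2 u3 : c1 != c3 -> c2 != c3 ->
  gen_eigen c1 k (u2 + u3) -> gen_eigen c2 m u2 -> gen_eigen c3 m u3 -> u3 = 0.
Proof.
(* [(ad z - c2)^m u3] is a generalized eigenvector for both [c1] and [c3]. *)
move=> n13 n23 G G2 G3; apply: (gen_eigen_eq0 n23 (k := m) _ G3).
apply: (gen_eigen_eq0 n13 (k := k) (m := m)); rewrite /gen_eigen iter_ad_shift_commute.
- have := G; rewrite /gen_eigen linearD /= => /eqP; rewrite addrC addr_eq0 => /eqP ->.
  by rewrite linearN /= -iter_ad_shift_commute G2 linear0 oppr0.
- by rewrite G3 linear0.
Qed.

Lemma gen_eigen_component c1 c2 c3 k m u1 u2 u3 :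
  c1 != c2 -> c1 != c3 -> c2 != c3 ->
  gen_eigen c1 m u1 -> gen_eigen c2 m u2 -> gen_eigen c3 m u3 ->
  gen_eigen c1 k (u1 + u2 + u3) -> u1 + u2 + u3 = u1.
Proof.
move=> n12 n13 n23 G1 G2 G3 G.
have G23 : gen_eigen c1 (k + m) (u2 + u3).
  have -> : u2 + u3 = u1 + u2 + u3 - u1 by rewrite [RHS]addrC -addrA addKr.
  by apply: gen_eigenB; [apply: gen_eigen_le G; rewrite leq_addr
                        | apply: gen_eigen_le G1; rewrite leq_addl].
have u3_0 := gen_eigen_addr_eq0 n13 n23 G23 G2 G3.
rewrite u3_0 addr0 in G23.
by rewrite u3_0 (gen_eigen_eq0 n12 G23 G2) !addr0.
Qed.

End GeneralizedEigenvectors.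

Definition C_numClosed : numClosedFieldType := Rdefinitions.R[i].

Import VectorInternalTheory.

Section AdjointMatrix.
Variables (V : vectType C) (L : lie_bracket V) (z : V).

Definition ad_row (u : 'rV[C]_(dim V)) := v2r (lb L z (r2v u)).

Fact ad_row_is_linear : linear ad_row.
Proof. by move=> a u w; rewrite /ad_row !linearP. Qed.
HB.instance Definition _ :=
  GRing.isLinear.Build C _ _ *:%R ad_row ad_row_is_linear.

Definition ad_mx := lin1_mx ad_row.

Lemma r2v_mul_ad_mx_subX c k (w : 'rV_(dim V)) :
  r2v (w *m (ad_mx - c%:M) ^+ k) = iter k (ad_shift L z c) (r2v w).
Proof.
have step u : r2v (u *m (ad_mx - c%:M)) = ad_shift L z c (r2v u).
  by rewrite mulmxBr mul_rV_lin1 mul_mx_scalar linearB linearZ /= /ad_row v2rK.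
elim: k => [|k IHk]; first by rewrite expr0 mulmx1.
by rewrite exprSr mulmxA step IHk.
Qed.

Lemma eigenvalue_ad_mx c : eigenvalue ad_mx c -> ad_eigenvalue L z c.
Proof.
case/eigenvalueP => w w_eigen w_neq0; exists (r2v w).
  by apply: contra w_neq0 => /eqP w0; rewrite -(r2vK w) w0 linear0.
by have := congr1 r2v w_eigen; rewrite mul_rV_lin1 /ad_row v2rK linearZ.
Qed.

Lemma ad_geneigen_split3 c1 c2 c3 : c1 != c2 -> c1 != c3 -> c2 != c3 ->
    (forall c, ad_eigenvalue L z c -> [\/ c = c1, c = c2 | c = c3]) ->
  forall v, exists u1 u2 u3, [/\ v = u1 + u2 + u3,
    gen_eigen L z c1 (dim V) u1, gen_eigen L z c2 (dim V) u2
  & gen_eigen L z c3 (dim V) u3].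
Proof.
move=> n12 n13 n23 spectrum v.
have [|u1 [u2 [u3 [def_v G1 G2 G3]]]] :=
  @row_geneigen_split3 C_numClosed _ ad_mx c1 c2 c3 n12 n13 n23 _ (v2r v).
  by move=> c /eigenvalue_ad_mx /spectrum.
exists (r2v u1), (r2v u2), (r2v u3); split.
- by rewrite -[v]v2rK def_v !linearD.
- by rewrite /gen_eigen -r2v_mul_ad_mx_subX G1 linear0.
- by rewrite /gen_eigen -r2v_mul_ad_mx_subX G2 linear0.
- by rewrite /gen_eigen -r2v_mul_ad_mx_subX G3 linear0.
Qed.

End AdjointMatrix.

Section NonzeroGeneralizedEigenspaces.
Variables (V : vectType C) (L : lie_bracket V) (z : V) (a b : C).
Hypotheses (a_neq0 : a != 0) (b_neq0 : b != 0) (ab_neq : a != b).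
Hypothesis spectrum : forall c, ad_eigenvalue L z c <-> [\/ c = 0, c = a | c = b].
Local Notation "[[ x , y ]]" := (lb L x y).

Definition geneigenspace c : {vspace V} :=
  lker (linfun (iter (dim V) (ad_shift L z c))).

Lemma geneigenspaceP c v :
  reflect (gen_eigen L z c (dim V) v) (v \in geneigenspace c).
Proof. by rewrite memv_ker lfunE; apply: eqP. Qed.

Lemma geneigen_decomposition v : exists u0 u1 u2, [/\ v = u0 + u1 + u2,
  gen_eigen L z 0 (dim V) u0, gen_eigen L z a (dim V) u1
& gen_eigen L z b (dim V) u2].
Proof.
apply: ad_geneigen_split3 => //.
- by rewrite eq_sym.
- by rewrite eq_sym.
- by move=> c /spectrum.
Qed.

Lemma gen_eigen_geneigenspace c k v :
  gen_eigen L z c k v -> v \in geneigenspace c.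
Proof.
move=> Gv; have [->|v_neq0] := eqVneq v 0; first exact: mem0v.
have [u0 [u1 [u2 [def_v G0 G1 G2] ] ] ] := geneigen_decomposition v.
apply/geneigenspaceP.
case/spectrum: (gen_eigen_eigenvalue Gv v_neq0) => def_c; rewrite def_c in Gv *.
- rewrite def_v in Gv *.
  by rewrite (gen_eigen_component _ _ ab_neq G0 G1 G2 Gv) // eq_sym.
- rewrite def_v (addrC u0) in Gv *.
  by rewrite (gen_eigen_component a_neq0 ab_neq _ G1 G0 G2 Gv) // eq_sym.
- rewrite def_v addrC addrA in Gv *.
  by rewrite (gen_eigen_component b_neq0 _ _ G2 G0 G1 Gv) // eq_sym.
Qed.

Lemma geneigenspace_eq0 c : c != 0 -> c != a -> c != b -> geneigenspace c = 0%VS.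
Proof.
move=> c0 ca cb; apply/eqP; rewrite -subv0; apply/subvP => v.
rewrite memv0 => /geneigenspaceP Gv; apply/contraT => v_neq0.
case/spectrum: (gen_eigen_eigenvalue Gv v_neq0) => def_c.
- by rewrite def_c eqxx in c0.
- by rewrite def_c eqxx in ca.
- by rewrite def_c eqxx in cb.
Qed.

Lemma bracket_geneigenspace c d x y :
  x \in geneigenspace c -> y \in geneigenspace d ->
  [[x, y]] \in geneigenspace (c + d).
Proof.
move=> /geneigenspaceP Gx /geneigenspaceP Gy.
exact: gen_eigen_geneigenspace (gen_eigen_bracket Gx Gy).
Qed.

Lemma iter_derived_geneigenspace c U k : (U <= geneigenspace c)%VS ->
  (iter k (derived L) U <= geneigenspace (c *+ 2 ^ k))%VS.
Proof.
move=> sUc; elim: k => [|k IHk]; first by rewrite expn0 mulr1n.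
rewrite iterS expnS mul2n -addnn mulrnDr.
apply: derived_sub => x y /(subvP IHk) x_c /(subvP IHk) y_c.
exact: bracket_geneigenspace.
Qed.

Lemma geneigenspace_solvable c U : c != 0 -> (U <= geneigenspace c)%VS ->
  solvable_subspace L U.
Proof.
move=> c0 sUc; have [k] := @exists_natmul_exp2_notin C_numClosed c a b c0.
rewrite !inE !negb_or => /and3P[ck0 cka ckb]; exists k.
apply/eqP; rewrite -subv0 -(geneigenspace_eq0 ck0 cka ckb).
exact: iter_derived_geneigenspace.
Qed.

Definition nonzero_geneigenspaces := (geneigenspace a + geneigenspace b)%VS.

Lemma geneigenspace_sub c : c != 0 ->
  (geneigenspace c <= nonzero_geneigenspaces)%VS.
Proof.
move=> c0; have [->|ca] := eqVneq c a; first exact: addvSl.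
have [->|cb] := eqVneq c b; first exact: addvSr.
by rewrite geneigenspace_eq0 ?sub0v.
Qed.

Lemma nonzero_geneigenspaces_neq0 : nonzero_geneigenspaces != 0%VS.
Proof.
have [v v_neq0 v_eigen] : ad_eigenvalue L z a by apply/spectrum; apply: Or32.
apply: contraNneq v_neq0 => N0; rewrite -memv0 -N0.
apply: (subvP (geneigenspace_sub a_neq0)); apply: (@gen_eigen_geneigenspace _ 1).
by rewrite /gen_eigen /= /ad_shift v_eigen subrr.
Qed.

Hypothesis ab_sum : a + b != 0.

Lemma nonzero_geneigenspaces_ideal : is_ideal L nonzero_geneigenspaces.
Proof.
have bracket_sub (c : C) x y : [/\ c != 0, c + a != 0 & c + b != 0] ->
    x \in geneigenspace c -> [[x, y]] \in nonzero_geneigenspaces.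
  case=> c0 ca0 cb0 x_c.
  have [y0 [y1 [y2 [-> G0 G1 G2] ] ] ] := geneigen_decomposition y.
  have sub d w : c + d != 0 -> gen_eigen L z d (dim V) w ->
      [[x, w]] \in nonzero_geneigenspaces.
    move=> cd0 Gw; apply: (subvP (geneigenspace_sub cd0)).
    exact: bracket_geneigenspace x_c (introT (geneigenspaceP _ _) Gw).
  rewrite !linearD /= !rpredD //.
  - by apply: (sub 0) G0; rewrite addr0.
  - exact: (sub a) G1.
  - exact: (sub b) G2.
move=> x y /memv_addP[x1 x1a [x2 x2b ->] ].
rewrite lbDl rpredD //; [apply: bracket_sub x1a | apply: bracket_sub x2b].
- by split; rewrite ?(@double_neq0 C_numClosed).
- by split; rewrite ?(@double_neq0 C_numClosed) // addrC.
Qed.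

Lemma derived_nonzero_geneigenspaces :
  exists2 c, c != 0 & (derived L nonzero_geneigenspaces <= geneigenspace c)%VS.
Proof.
have ab_0 : geneigenspace (a + b) = 0%VS.
  apply: geneigenspace_eq0 => //; rewrite -subr_eq0.
  - by rewrite addrAC subrr add0r.
  - by rewrite addrK.
have sub2 : (derived L nonzero_geneigenspaces <=
             geneigenspace (a + a) + geneigenspace (b + b))%VS.
  apply: derived_sub => _ _ /memv_addP[x1 x1a [x2 x2b ->] ]
                            /memv_addP[y1 y1a [y2 y2b ->] ].
  rewrite lbDl !linearD /=.
  have -> : [[x1, y2]] = 0 by apply/eqP; rewrite -memv0 -ab_0 bracket_geneigenspace.
  have -> : [[x2, y1]] = 0.
    by apply/eqP; rewrite -memv0 -ab_0 addrC bracket_geneigenspace.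
  by rewrite addr0 add0r memv_add ?bracket_geneigenspace.
have [b2a|b2a] := eqVneq b (a + a).
  have bb_0 : geneigenspace (b + b) = 0%VS.
    apply: geneigenspace_eq0; first exact: (@double_neq0 C_numClosed).
    - by rewrite b2a (@quadruple_neq C_numClosed).
    - by rewrite -subr_eq0 addrK.
  exists (a + a); first exact: (@double_neq0 C_numClosed).
  by rewrite bb_0 addv0 in sub2.
have aa_0 : geneigenspace (a + a) = 0%VS.
  apply: geneigenspace_eq0; first exact: (@double_neq0 C_numClosed).
  - by rewrite -subr_eq0 addrK.
  - by rewrite eq_sym.
exists (b + b); first exact: (@double_neq0 C_numClosed).
by rewrite aa_0 add0v in sub2.
Qed.

Lemma nonzero_geneigenspaces_solvable :
  solvable_subspace L nonzero_geneigenspaces.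
Proof.
have [c c_neq0 /(geneigenspace_solvable c_neq0)[k derived_k] ] :=
  derived_nonzero_geneigenspaces.
by exists k.+1; rewrite iterSr.
Qed.

End NonzeroGeneralizedEigenspaces.

Theorem lemma3p4 (V : vectType C) (L : lie_bracket V) (Hss : semisimple L)
  (z : V) (alpha beta : C)
  (Hdist : [/\ alpha != 0, beta != 0 & alpha != beta])
  (Heig : forall a : C, ad_eigenvalue L z a <-> [\/ a = 0, a = alpha | a = beta]) :
  alpha + beta = 0.
Proof.
case: Hdist => a_neq0 b_neq0 ab_neq; apply/eqP/contraT => ab_sum.
have N_ideal := nonzero_geneigenspaces_ideal a_neq0 b_neq0 ab_neq Heig ab_sum.
have N_solvable :=
  nonzero_geneigenspaces_solvable a_neq0 b_neq0 ab_neq Heig ab_sum.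
have := nonzero_geneigenspaces_neq0 a_neq0 b_neq0 ab_neq Heig.
by rewrite (Hss _ N_ideal N_solvable) eqxx.
Qed.
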